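(* Let $k\ge 0$, $n\ge 1$, let $G\sim\mathcal G_n^k$ and let $E$ be the number of edges of $G$. Then $\mathbb E[E]=\binom n2$ for $n\le k+2$, and for $n\ge k+3$ $$\mathbb E[E]=\frac12(k+1)\left(4n-3k-6-2(k+2)\sum_{l=k+3}^{n}\frac1l\right)=(k+1)(2n-o(n)).$$ Moreover, for every $t\ge 0$, $$\mathbb P\big(|E-\mathbb E[E]|>(k+1)t\big)\le 2\exp\left(-\frac{2t^2}{n}\right).$$
   Context: A semi-bar $k$-visibility representation is a finite collection of pairwise disjoint closed horizontal segments (bars) in the plane whose left endpoints all lie on one common vertical line; two bars are adjacent if there is a vertical segment with endpoints on the two bars intersecting at most $k$ other bars; the semi-bar $k$-visibility graph has one vertex per bar. $\mathcal G_n^k$ is the distribution of the random semi-bar $k$-visibility graph on $n$ vertices obtained from $n$ bars at $n$ distinct heights whose left endpoints lie at $x=0$ and whose right endpoints are drawn i.i.d. uniformly from $(0,1)$ (equivalently, the relative order of the bar lengths from top to bottom is a uniformly random permutation in $S_n$). *)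

From mathcomp Require Import all_boot all_order all_algebra all_fingroup.
From mathcomp Require Import all_classical all_reals all_analysis.
Set Implicit Arguments. Unset Strict Implicit. Unset Printing Implicit Defensive.
Import Order.TTheory GRing.Theory Num.Theory.

(* Discrete model of G_n^k: bars indexed by their height rank i : 'I_n
   (i = 0 topmost), all with left endpoint at x = 0; the bar at rank i has
   right endpoint (s i).+1 in {1,..,n}, where s is a permutation of 'I_n.
   Only the relative order of lengths matters, and a uniform s is the
   uniform relative order of n i.i.d. Uniform(0,1) lengths. *)

Definition between n (i j m : 'I_n) : bool :=
  (minn i j < m) && (m < maxn i j).

(* The vertical segment at abscissa x joining bars i and j exists iff
   x <= min(length i, length j), and it intersects the intermediate bar m
   iff x <= length m (bars are closed).  Since the number of bars hit is
   monotone in x and lengths are integers, quantifying over integer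
   abscissae x in {0,..,n} is the same as quantifying over real x >= 0. *)
Definition sbvis_adj n (k : nat) (s : {perm 'I_n}) (i j : 'I_n) : bool :=
  (i != j) &&
  [exists x : 'I_n.+1,
     (x <= minn (s i).+1 (s j).+1) &&
     (#|[set m : 'I_n | between i j m && (x <= (s m).+1)]| <= k)].

Definition num_edges n (k : nat) (s : {perm 'I_n}) : nat :=
  #|[set p : 'I_n * 'I_n | (p.1 < p.2) && sbvis_adj k s p.1 p.2]|.

Definition expect_edges (R : realType) n (k : nat) : R :=
  ((\sum_(s : {perm 'I_n}) (num_edges k s)%:R) / (n`!)%:R)%R.

Definition prob_dev (R : realType) n (k : nat) (t : R) : R :=
  ((#|[set s : {perm 'I_n} |
        ((k.+1)%:R * t < `|(num_edges k s)%:R - expect_edges R n k|)%R]|)%:R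
   / (n`!)%:R)%R.

From mathcomp Require Import all_boot all_order all_algebra all_fingroup.
From mathcomp Require Import all_classical all_reals all_analysis.
From mathcomp Require Import ring lra zify.
Import Order.TTheory GRing.Theory Num.Theory.
Import numFieldNormedType.Exports.
Set Implicit Arguments. Unset Strict Implicit. Unset Printing Implicit Defensive.

(* For i < j the bars i and j see each other iff at most k bars strictly
   between them are longer than the shorter of the two.  Charge every edge to
   its shorter endpoint x: the edges charged to x on its right go to the first
   k+1 bars right of x that are longer than x, so
     E = sum_x (min(k+1, #longer bars left of x) + min(k+1, #longer bars right of x)).
   Inserting a new shortest bar at height p into n bars leaves every other term
   unchanged and adds gain(n, p) = min(k+1, p) + min(k+1, n-p).  Building a
   uniform permutation by successive insertions of the shortest bar at uniform
   independent heights, E is a sum of n independent increments, the g-th one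
   uniform on {gain(g, p) | p <= g}, which lies in an interval of length k+1.
   Summing their means gives the formula for E[E]; Hoeffding's lemma for each
   increment and the Chernoff bound give the concentration; the means tend to
   2(k+1), so E[E]/(k+1) = 2n - o(n) by Cesaro. *)

(** * Counting the edges *)

Lemma card_set_sum (T : finType) (P : pred T) : #|[set x | P x]| = \sum_x P x.
Proof. by rewrite -sum1dep_card big_mkcond. Qed.

Section RankCount.
Variables (T : finType) (r : rel T).
Hypotheses (r_irr : irreflexive r) (r_trans : transitive r).
Hypothesis r_total : forall x y, x != y -> r x y || r y x.

Lemma card_rank_le (k : nat) (S : {set T}) :
  #|[set y in S | #|[set z in S | r z y]| <= k]| = minn k.+1 #|S|.
Proof.
move cardS: #|S| => m; elim: m S cardS => [|m IHm] S cardS.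
  rewrite minn0 (cards0_eq cardS); apply/eqP; rewrite cards_eq0.
  by apply/eqP/setP => y; rewrite !inE.
pose rank y := #|[set z in S | r z y]|.
have [y0 Sy0] : {y0 | y0 \in S}.
  by case: (set_0Vmem S) => [S0|//]; rewrite S0 cards0 in cardS.
pose top := [arg max_(y > y0 in S) rank y].
have [Stop top_max] : top \in S /\ forall y, y \in S -> rank y <= rank top.
  by rewrite /top; case: arg_maxnP.
have top_above y : y \in S -> r top y = false.
  move=> Sy; apply/negbTE/negP => r_top_y; have := top_max _ Sy.
  apply/negP; rewrite -ltnNge; apply: proper_card; apply/properP; split.
    by apply/fintype.subsetP => z; rewrite !inE => /andP[-> /r_trans]; apply.
  by exists top; rewrite !inE ?Stop ?r_top_y ?r_irr.
have rank_top : rank top = m.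
  apply/eqP; rewrite -eqSS -cardS (cardsD1 top S) Stop add1n eqSS.
  apply/eqP/eq_card => z; rewrite !inE; case: eqVneq => [->|ztop].
    by rewrite r_irr andbF.
  by case Sz: (z \in S) => //=; move: (r_total ztop); rewrite top_above // orbF.
have rank_rest y : y \in S :\ top -> rank y = #|[set z in S :\ top | r z y]|.
  rewrite !inE => /andP[ytop Sy]; apply: eq_card => z; rewrite !inE.
  by case: eqVneq => // ->; rewrite Stop top_above.
have cardS' : #|S :\ top| = m.
  by move: cardS; rewrite (cardsD1 top S) Stop add1n => -[].
rewrite (cardsD1 top) !inE Stop /= -/(rank top) rank_top.
have -> : [set y in S | rank y <= k] :\ top =
          [set y in S :\ top | #|[set z in S :\ top | r z y]| <= k].
  apply/setP => z; rewrite !inE; case: eqVneq => //= ztop.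
  by case Sz: (z \in S) => //=; rewrite rank_rest // !inE ztop.
by rewrite IHm //; case: leqP => /=; lia.
Qed.

End RankCount.

Section EdgeCount.
Variables (n k : nat) (s : {perm 'I_n}).

Definition longer_left (x : 'I_n) := [set y : 'I_n | (y < x) && (s x < s y)].
Definition longer_right (x : 'I_n) := [set y : 'I_n | (x < y) && (s x < s y)].

Definition edge_count : nat :=
  \sum_x (minn k.+1 #|longer_left x| + minn k.+1 #|longer_right x|).

Lemma sbvis_adjE (i j : 'I_n) : i < j ->
  sbvis_adj k s i j =
  (#|[set m : 'I_n | [&& i < m, m < j & minn (s i) (s j) < s m]]| <= k).
Proof.
move=> ij; have neij : i != j by rewrite neq_ltn ij.
have betweenE m : between i j m = (i < m) && (m < j).
  by rewrite /between (minn_idPl (ltnW ij)) (maxn_idPr (ltnW ij)).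
rewrite /sbvis_adj neij; apply/existsP/idP => [[x /andP[hx]]|hk].
  apply: leq_trans; apply: subset_leq_card; apply/fintype.subsetP => m.
  rewrite !inE betweenE => /and3P[-> -> hm] /=.
  by apply: leq_trans hx _; rewrite minnSS ltnS ltnW.
have lt_min : (minn (s i) (s j)).+1 < n.+1 by rewrite ltnS gtn_min ltn_ord.
exists (inord (minn (s i) (s j)).+1); rewrite inordK // minnSS leqnn /=.
apply: leq_trans hk; apply/eq_leq/eq_card => m; rewrite !inE betweenE ltnS.
case: (boolP (i < m)) => //= im; case: (boolP (m < j)) => //= mj.
rewrite leq_eqVlt; case: eqVneq => //= mE.
have [/minn_idPl|/ltnW/minn_idPr] := leqP (s i) (s j); rewrite mE.
  by move/val_inj/perm_inj=> mi; rewrite mi ltnn in im.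
by move/val_inj/perm_inj=> mj'; rewrite mj' ltnn in mj.
Qed.

Definition longer_right_nbrs (i : 'I_n) :=
  [set j in longer_right i | #|[set m in longer_right i | m < j]| <= k].
Definition longer_left_nbrs (j : 'I_n) :=
  [set i in longer_left j | #|[set m in longer_left j | i < m]| <= k].

Lemma card_longer_right_nbrs (i : 'I_n) :
  #|longer_right_nbrs i| = minn k.+1 #|longer_right i|.
Proof.
apply: (card_rank_le (r := fun a b : 'I_n => a < b)) => [a|a b c|a b].
- exact: ltnn.
- exact: ltn_trans.
- by rewrite -val_eqE neq_ltn.
Qed.

Lemma card_longer_left_nbrs (j : 'I_n) :
  #|longer_left_nbrs j| = minn k.+1 #|longer_left j|.
Proof.
apply: (card_rank_le (r := fun a b : 'I_n => b < a)) => [a|a b c|a b].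
- exact: ltnn.
- by move=> ab bc; apply: ltn_trans ab.
- by rewrite -val_eqE neq_ltn orbC.
Qed.

Lemma sbvis_adj_split (i j : 'I_n) :
  ((i < j) && sbvis_adj k s i j : nat) =
  (j \in longer_right_nbrs i) + (i \in longer_left_nbrs j).
Proof.
rewrite /longer_right_nbrs /longer_left_nbrs !inE.
case: (ltnP i j) => [ij|_] //=; rewrite sbvis_adjE //.
case: ltngtP => [sij|sji|/val_inj/perm_inj eij] /=.
- rewrite addn0; congr (nat_of_bool (_ <= k)).
  by apply: eq_card => m; rewrite !inE andbA andbAC.
- rewrite add0n; congr (nat_of_bool (_ <= k)).
  by apply: eq_card => m; rewrite !inE andbC.
- by rewrite eij ltnn in ij.
Qed.

Lemma num_edgesE : num_edges k s = edge_count.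
Proof.
rewrite /num_edges card_set_sum.
rewrite -(pair_bigA _ (fun i j : 'I_n => ((i < j) && sbvis_adj k s i j : nat))) /=.
under eq_bigr do under eq_bigr do rewrite sbvis_adj_split.
under eq_bigr do rewrite big_split /=.
rewrite big_split /= addnC exchange_big /edge_count -big_split /=.
apply: eq_bigr => x _.
rewrite -card_longer_left_nbrs -card_longer_right_nbrs !card_set_sum.
by congr (_ + _); apply: eq_bigr => y _; rewrite inE.
Qed.

End EdgeCount.

(** * Inserting the shortest bar *)

Lemma ltn_bump2 h i j : (bump h i < bump h j) = (i < j).
Proof. by rewrite !ltnNge leq_bump2. Qed.

Lemma card_set_lift n (p : 'I_n.+1) (P : pred 'I_n.+1) :
  #|[set y | P y]| = P p + #|[set y : 'I_n | P (lift p y)]|.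
Proof. by rewrite !card_set_sum (bigD1_ord p). Qed.

Lemma card_ord_ltn n m : #|[set i : 'I_n | i < m]| = minn m n.
Proof.
rewrite card_set_sum; elim: n => [|n IHn]; first by rewrite big_ord0 minn0.
by rewrite big_ord_recr /= IHn; case: ltnP => /=; lia.
Qed.

Definition gain (k g p : nat) : nat := minn k.+1 p + minn k.+1 (g - p).

(* lift_perm p ord0 s inserts a new shortest bar at height p into s. *)
Lemma edge_count_lift_perm k n (p : 'I_n.+1) (s : 'S_n) :
  edge_count k (lift_perm p ord0 s) = gain k n p + edge_count k s.
Proof.
set t := lift_perm p ord0 s.
have tp : t p = ord0 by rewrite lift_perm_id.
have tl y : t (lift p y) = lift ord0 (s y) by rewrite lift_perm_lift.
have lift_ltn y : (lift p y < p) = (y < p) by rewrite /= /bump; case: leqP => /=; lia.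
have p_le_n : p <= n by rewrite -ltnS.
have left_p : #|longer_left t p| = p.
  rewrite /longer_left (card_set_lift p) tp ltnn /=.
  rewrite -[RHS](minn_idPl p_le_n) -card_ord_ltn.
  by apply: eq_card => y; rewrite !inE tl lift_ltn andbT.
have right_p : #|longer_right t p| = n - p.
  have := cardsC [set y : 'I_n | y < p].
  rewrite card_ord card_ord_ltn (minn_idPl p_le_n).
  suff -> : #|~: [set y : 'I_n | y < p]| = #|longer_right t p| by lia.
  rewrite /longer_right (card_set_lift p) tp ltnn /=; apply: eq_card => y.
  by rewrite !inE tl andbT -lift_ltn /= -leqNgt ltn_neqAle neq_bump.
have left_lift y : #|longer_left t (lift p y)| = #|longer_left s y|.
  rewrite /longer_left (card_set_lift p) tp tl ltn0 andbF add0n.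
  by apply: eq_card => z; rewrite !inE tl /= !ltn_bump2.
have right_lift y : #|longer_right t (lift p y)| = #|longer_right s y|.
  rewrite /longer_right (card_set_lift p) tp tl ltn0 andbF add0n.
  by apply: eq_card => z; rewrite !inE tl /= !ltn_bump2.
rewrite /edge_count (bigD1_ord p) //= left_p right_p; congr (_ + _).
by apply: eq_bigr => y _; rewrite left_lift right_lift.
Qed.

Lemma lift_perm0_bij n :
  bijective (fun q : 'I_n.+1 * 'S_n => lift_perm q.1 ord0 q.2).
Proof.
apply: inj_card_bij; last by rewrite card_prod card_ord !card_Sn factS.
move=> [p s] [p' s'] /= E.
have pp' : p = p'.
  have := congr1 (fun u : 'S_n.+1 => (u^-1)%g ord0) E.
  by rewrite /= !lift_permV !lift_perm_id.
subst p'; congr (_, _); apply/permP => y; apply: (@lift_inj _ ord0).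
by rewrite -!(lift_perm_lift p) E.
Qed.

Lemma sum_perm_lift (V : nmodType) n (F : 'S_n.+1 -> V) :
  (\sum_(s : 'S_n.+1) F s =
   \sum_(p : 'I_n.+1) \sum_(s : 'S_n) F (lift_perm p ord0 s))%R.
Proof. by rewrite pair_big (reindex _ (onW_bij _ (lift_perm0_bij n))). Qed.

Local Open Scope classical_set_scope.
Local Open Scope ring_scope.

(** * The expected number of edges *)

Lemma sum_gain k g : (\sum_(p < g.+1) gain k g p =
  if g <= k.+1 then g * g.+1 else k.+1 * k.+2 + 2 * k.+1 * (g - k.+1))%N.
Proof.
have sym : (\sum_(p < g.+1) minn k.+1 (g - p) = \sum_(p < g.+1) minn k.+1 p)%N.
  rewrite (reindex_inj rev_ord_inj); apply: eq_bigr => p _.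
  by rewrite /= subSS subKn // -ltnS.
rewrite big_split /= sym addnn -mul2n.
elim: g {sym} => [|g IHg]; first by rewrite big_ord_recr big_ord0.
rewrite big_ord_recr /= mulnDr IHg.
by case: (leqP g k.+1) => h1; case: (leqP g.+1 k.+1) => h2 //=; nia.
Qed.

Section Expectation.
Variables (R : realType) (k : nat).

Definition mean_gain (g : nat) : R := (\sum_(p < g.+1) gain k g p)%:R / g.+1%:R.

Lemma mean_gain_small g : (g <= k.+1)%N -> mean_gain g = g%:R.
Proof.
move=> gk; rewrite /mean_gain sum_gain gk natrM.
by field; rewrite nat1r pnatr_eq0.
Qed.

Lemma mean_gain_large g : (k.+1 <= g)%N ->
  mean_gain g = 2 * k.+1%:R - (k.+1 * k.+2)%:R / g.+1%:R.
Proof.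
move=> kg; rewrite /mean_gain sum_gain.
have -> : (if g <= k.+1 then g * g.+1 else k.+1 * k.+2 + 2 * k.+1 * (g - k.+1))%N =
          (k.+1 * k.+2 + 2 * k.+1 * (g - k.+1))%N.
  case: leqP => // gk; have -> : g = k.+1 by apply/eqP; rewrite eqn_leq gk.
  by rewrite subnn muln0 addn0.
rewrite natrD !natrM natrB //.
by field; rewrite nat1r pnatr_eq0.
Qed.

Lemma expect_edgesE n :
  expect_edges R n k = (\sum_(s : 'S_n) (edge_count k s)%:R) / n`!%:R.
Proof. by congr (_ / _); apply: eq_bigr => s _; rewrite num_edgesE. Qed.

Lemma expect_edgesS n : expect_edges R n.+1 k = expect_edges R n k + mean_gain n.
Proof.
rewrite !expect_edgesE /mean_gain sum_perm_lift.
under eq_bigr do under eq_bigr do rewrite edge_count_lift_perm natrD.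
under eq_bigr do rewrite big_split /= sumr_const.
rewrite card_Sn big_split /= sumr_const card_ord sumrMnl natr_sum factS natrM.
set G := \sum_(i < n.+1) _; set E := \sum_(s : 'S_n) _.
rewrite -(mulr_natr G) -(mulr_natr E).
by field; rewrite nat1r !pnatr_eq0 -!lt0n fact_gt0.
Qed.

Lemma expect_edges_small n : (n <= k.+2)%N -> expect_edges R n k = 'C(n, 2)%:R.
Proof.
elim: n => [|n IHn] nk.
  by rewrite expect_edgesE big1 ?mul0r // => s _; rewrite /edge_count big_ord0.
by rewrite expect_edgesS (IHn (ltnW nk)) mean_gain_small // binS bin1 natrD.
Qed.

Lemma expect_edges_large n : (k.+2 <= n)%N ->
  expect_edges R n k =
  2^-1 * k.+1%:R * (4 * n%:R - 3 * k%:R - 6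
                    - 2 * (k + 2)%:R * \sum_(k + 3 <= l < n.+1) l%:R^-1).
Proof.
elim: n => [//|n IHn]; rewrite leq_eqVlt => /predU1P[<-|kn].
  rewrite expect_edges_small // big_geq ?addn3 //.
  have bin2E : ('C(k.+2, 2) * 2 = k.+2 * k.+1)%N by rewrite mulnC -mul_bin_diag bin1.
  have -> : 'C(k.+2, 2)%:R = (k.+2 * k.+1)%:R / 2 :> R.
    by rewrite -bin2E natrM mulfK // pnatr_eq0.
  by rewrite natrM natrD; field.
have kn' : (k.+2 <= n)%N := kn.
rewrite expect_edgesS (IHn kn') (mean_gain_large (ltnW kn')).
rewrite [in RHS]big_nat_recr /= ?addn3 // natrM !natrD.
by field; rewrite nat1r pnatr_eq0.
Qed.

End Expectation.

(** * Hoeffding's lemma and the Chernoff bound *)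

Section Hoeffding.
Variable R : realType.

Lemma expR_scale_le (u y : R) : 0 <= u <= 1 -> expR (u * y) <= 1 - u + u * expR y.
Proof.
move=> /andP[u0 u1].
have u01 : Itv.spec (@Itv.num_sem R) (Itv.Real `[0%Z, 1%Z]) u.
  by rewrite /= /Itv.num_sem /= in_itv /= u0 u1 (ger0_real u0).
have := convex_expR (Itv.Def u01) y 0.
by rewrite !convRE /= mulr0 addr0 expR0 mulr1 /unstable.onem addrC.
Qed.

Lemma derive_le0_nincr (f df : R -> R) (a b : R) :
  (forall x : R, is_derive x (1 : R) f (df x)) ->
  (forall x, a <= x <= b -> df x <= 0) -> a <= b -> f b <= f a.
Proof.
move=> f_df df_le0 ab.
have f_cont : {within `[a, b], continuous f}.
  by apply: derivable_within_continuous => x _; case: (f_df x).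
have [c] := MVT_segment ab (fun x _ => f_df x) f_cont.
rewrite in_itv /= => /df_le0 dfc fE; rewrite -subr_le0 fE.
by rewrite mulr_le0_ge0 // subr_ge0.
Qed.

Lemma derive_ge0_ndecr (f df : R -> R) (a b : R) :
  (forall x : R, is_derive x (1 : R) f (df x)) ->
  (forall x, a <= x <= b -> 0 <= df x) -> a <= b -> f a <= f b.
Proof.
move=> f_df df_ge0 ab.
have f_cont : {within `[a, b], continuous f}.
  by apply: derivable_within_continuous => x _; case: (f_df x).
have [c] := MVT_segment ab (fun x _ => f_df x) f_cont.
rewrite in_itv /= => /df_ge0 dfc fE; rewrite -subr_ge0 fE.
by rewrite mulr_ge0 // subr_ge0.
Qed.

Section TwoPoint.
Variable p : R.
Hypothesis p01 : 0 <= p <= 1.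

Let mgf (h : R) := 1 - p + p * expR h.

Let mgf_gt0 h : 0 < mgf h.
Proof. by have := expR_gt0 h; rewrite /mgf; case/andP: p01 => *; nra. Qed.

Let mgf_derive h : is_derive h (1 : R) mgf (p * expR h).
Proof. by apply: is_derive_eq; rewrite add0r mul1r. Qed.

(* phi is the derivative of ln (mgf h) - p h - h^2/8; it vanishes at 0 and
   decreases, because (1 - p) (p e^h) <= mgf(h)^2 / 4. *)
Let phi (h : R) := (1 - p) - (1 - p) / mgf h - h / 4.

Let phi_derive h :
  is_derive h (1 : R) phi ((1 - p) * (p * expR h) / mgf h ^+ 2 - 1 / 4).
Proof.
have := is_deriveV (lt0r_neq0 (mgf_gt0 h)) (mgf_derive h) => mgfV_derive.
apply: is_derive_eq; rewrite /GRing.scale /=.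
by field; rewrite lt0r_neq0.
Qed.

Let phi_nincr h : (1 - p) * (p * expR h) / mgf h ^+ 2 - 1 / 4 <= 0.
Proof.
rewrite subr_le0 ler_pdivrMr ?exprn_gt0 //.
have := sqr_ge0 (1 - p - p * expR h); rewrite /mgf; nra.
Qed.

Let phi0 : phi 0 = 0.
Proof. by rewrite /phi /mgf expR0 mulr1 subrK invr1 mulr1 subrr mul0r subr0. Qed.

Let phi_le0 h : 0 <= h -> phi h <= 0.
Proof. by move=> h0; rewrite -phi0; apply: (derive_le0_nincr phi_derive). Qed.

Let phi_ge0 h : h <= 0 -> 0 <= phi h.
Proof. by move=> h0; rewrite -phi0; apply: (derive_le0_nincr phi_derive). Qed.

Let ratio (h : R) := mgf h * expR (- (h ^+ 2 / 8 + p * h)).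

Let ratio_derive h : is_derive h (1 : R) ratio (ratio h * phi h).
Proof.
have exp_derive : is_derive h (1 : R) (fun x => expR (- (x ^+ 2 / 8 + p * x)))
    (expR (- (h ^+ 2 / 8 + p * h)) * - (h / 4 + p)).
  by apply: is_derive1_comp; apply: is_derive_eq; rewrite /GRing.scale /=; field.
apply: (is_derive_eq (is_deriveM (mgf_derive h) exp_derive)).
have := lt0r_neq0 (mgf_gt0 h); rewrite /GRing.scale /= /ratio /phi /mgf => mgf_neq0.
by field.
Qed.

Let ratio_le1 h : ratio h <= 1.
Proof.
have ratio0 : ratio 0 = 1.
  by rewrite /ratio /mgf expR0 mulr1 subrK expr0n /= mul0r mulr0 addr0 oppr0 expR0 mulr1.
have ratio_ge0 x : 0 <= ratio x by rewrite mulr_ge0 ?expR_ge0 ?ltW.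
rewrite -ratio0; have [h0|/ltW h0] := leP 0 h.
  apply: (derive_le0_nincr ratio_derive) => // x /andP[x0 _].
  by rewrite mulr_ge0_le0 ?phi_le0.
apply: (derive_ge0_ndecr ratio_derive) => // x /andP[_ x0].
by rewrite mulr_ge0 ?phi_ge0.
Qed.

Lemma hoeffding_two_point h :
  (1 - p) * expR (- (p * h)) + p * expR ((1 - p) * h) <= expR (h ^+ 2 / 8).
Proof.
have -> : (1 - p) * expR (- (p * h)) + p * expR ((1 - p) * h) =
          ratio h * expR (h ^+ 2 / 8).
  rewrite /ratio /mgf -mulrA -expRD.
  have -> : (1 - p) * h = h + - (p * h) by ring.
  have -> : - (h ^+ 2 / 8 + p * h) + h ^+ 2 / 8 = - (p * h) by ring.
  rewrite expRD; ring.
by rewrite -[leRHS]mul1r ler_wpM2r ?expR_ge0.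
Qed.

End TwoPoint.

(* Convexity of exp bounds each term by the two-point case with the same mean. *)
Lemma hoeffding_uniform N (a : 'I_N -> R) (lo c lam : R) : (0 < N)%N -> 0 < c ->
  (forall i, lo <= a i <= lo + c) ->
  \sum_i expR (lam * (a i - (\sum_j a j) / N%:R)) <=
    N%:R * expR (lam ^+ 2 * c ^+ 2 / 8).
Proof.
move=> N_gt0 c_gt0 a_range; set m := (\sum_j a j) / N%:R.
have N_gt0R : 0 < N%:R :> R by rewrite ltr0n.
have [c_neq0 N_neq0] := (lt0r_neq0 c_gt0, lt0r_neq0 N_gt0R).
pose u i := (a i - lo) / c; pose q := (m - lo) / c; pose h := lam * c.
have u01 i : 0 <= u i <= 1.
  by have := a_range i; rewrite /u ler_pdivrMr // ler_pdivlMr // mul0r mul1r; lra.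
have sum_u : \sum_i u i = N%:R * q.
  rewrite /u /q /m -mulr_suml sumrB sumr_const card_ord -mulr_natl.
  by field; rewrite c_neq0 N_neq0.
have q01 : 0 <= q <= 1.
  have : \sum_(i < N) 0 <= \sum_i u i <= \sum_(i < N) 1.
    by rewrite !ler_sum // => i _; case/andP: (u01 i).
  rewrite sum_u big1_eq sumr_const card_ord -mulr_natl => /andP[q0 q1].
  by apply/andP; split; nra.
have term i : expR (lam * (a i - m)) <= expR (- (q * h)) * (1 - u i + u i * expR h).
  have -> : lam * (a i - m) = - (q * h) + u i * h by rewrite /q /h /u; field.
  by rewrite expRD ler_wpM2l ?expR_ge0 ?expR_scale_le.
apply: (le_trans (ler_sum _ (fun i _ => term i))).
rewrite -mulr_sumr !big_split /= -(mulr_suml _ _ u) sumrN sum_u sumr_const card_ord.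
have -> : expR (- (q * h)) * (1 *+ N - N%:R * q + N%:R * q * expR h) =
          N%:R * ((1 - q) * expR (- (q * h)) + q * expR ((1 - q) * h)).
  have -> : (1 - q) * h = h + - (q * h) by ring.
  rewrite expRD -mulr_natl; ring.
have -> : lam ^+ 2 * c ^+ 2 = h ^+ 2 by rewrite /h exprMn.
by rewrite ler_wpM2l ?ler0n ?hoeffding_two_point.
Qed.

End Hoeffding.

Lemma card_abs_gt_chernoff (R : realType) (T : finType) (x : T -> R) (u lam : R) :
  0 <= lam ->
  #|[set t | u < `|x t|]%SET|%:R <=
  expR (- (lam * u)) * (\sum_t expR (lam * x t) + \sum_t expR (- lam * x t)).
Proof.
move=> lam_ge0; rewrite card_set_sum natr_sum mulrDr !mulr_sumr -big_split /=.
apply: ler_sum => t _.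
have tail y : u < y -> 1 <= expR (- (lam * u)) * expR (lam * y).
  by move=> uy; rewrite -expRD -expR0 ler_expR; nra.
have e_ge0 y : 0 <= expR (- (lam * u)) * expR y by rewrite mulr_ge0 ?expR_ge0.
case: (boolP (u < `|x t|)) => [|_] /=; last by rewrite addr_ge0.
rewrite ltr_normr mulNr -mulrN => /orP[/tail|/tail] one_le.
  by rewrite -[1]addr0 lerD.
by rewrite -[1]add0r lerD.
Qed.

(** * Concentration and asymptotics *)

Section Concentration.
Variables (R : realType) (k : nat).

Lemma sum_expR_edge_dev n (lam : R) :
  \sum_(s : 'S_n) expR (lam * ((num_edges k s)%:R - expect_edges R n k)) <=
  n`!%:R * expR (lam ^+ 2 * k.+1%:R ^+ 2 * n%:R / 8).
Proof.
elim: n => [|n IHn].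
  have dev0 (s : 'S_0) : expR (lam * ((num_edges k s)%:R - expect_edges R 0 k)) = 1.
    by rewrite expect_edges_small // num_edgesE /edge_count big_ord0 subrr mulr0 expR0.
  by rewrite (eq_bigr _ (fun s _ => dev0 s)) sumr_const card_Sn /= mulr0 mul0r expR0 mulr1.
rewrite sum_perm_lift.
have dev_split (p : 'I_n.+1) (s : 'S_n) :
    expR (lam * ((num_edges k (lift_perm p ord0 s))%:R - expect_edges R n.+1 k)) =
    expR (lam * ((gain k n p)%:R - mean_gain R k n)) *
    expR (lam * ((num_edges k s)%:R - expect_edges R n k)).
  rewrite !num_edgesE edge_count_lift_perm expect_edgesS -expRD natrD.
  by congr expR; ring.
under eq_bigr do under eq_bigr do rewrite dev_split.
under eq_bigr do rewrite -mulr_sumr.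
rewrite -mulr_suml.
pose lo : R := (minn n k.+1)%:R.
have gain_range (p : 'I_n.+1) : lo <= (gain k n p)%:R <= lo + k.+1%:R.
  by have := ltn_ord p; rewrite /lo -natrD !ler_nat /gain; lia.
have := hoeffding_uniform lam (ltn0Sn n) (ltr0Sn R k) gain_range.
rewrite -natr_sum -/(mean_gain R k n) => gain_dev.
have sum_expR_ge0 (I : finType) (F : I -> R) : 0 <= \sum_i expR (F i).
  by rewrite sumr_ge0 // => i _; rewrite expR_ge0.
apply: le_trans (ler_pM (sum_expR_ge0 _ _) (sum_expR_ge0 _ _) gain_dev IHn) _.
have -> : lam ^+ 2 * k.+1%:R ^+ 2 * n.+1%:R / 8 =
          lam ^+ 2 * k.+1%:R ^+ 2 / 8 + lam ^+ 2 * k.+1%:R ^+ 2 * n%:R / 8.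
  by rewrite -natr1; ring.
by rewrite factS natrM expRD mulrACA.
Qed.

Lemma prob_dev_le n (t : R) : (0 < n)%N -> 0 <= t ->
  prob_dev n k t <= 2 * expR (- (2 * t ^+ 2) / n%:R).
Proof.
move=> n_gt0 t_ge0; rewrite /prob_dev ler_pdivrMr ?ltr0n ?fact_gt0 //.
set c : R := k.+1%:R; pose dev (s : 'S_n) := (num_edges k s)%:R - expect_edges R n k.
have [n_gt0R c_gt0] : 0 < n%:R :> R /\ 0 < c by rewrite !ltr0n.
(* the value of lam minimising the resulting Chernoff bound *)
pose lam := 4 * t / (c * n%:R).
have lam_ge0 : 0 <= lam by apply: divr_ge0; nra.
apply: le_trans (card_abs_gt_chernoff dev (c * t) lam_ge0) _.
have := lerD (sum_expR_edge_dev n lam) (sum_expR_edge_dev n (- lam)).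
rewrite sqrrN => /(ler_wpM2l (expR_ge0 (- (lam * (c * t))))) /le_trans; apply.
have -> : - (2 * t ^+ 2) / n%:R = - (lam * (c * t)) + lam ^+ 2 * c ^+ 2 * n%:R / 8.
  by rewrite /lam; field; rewrite !lt0r_neq0.
by rewrite expRD /c -subr_ge0 (_ : _ - _ = 0) //; ring.
Qed.

End Concentration.

Lemma expect_edges_cvg (R : realType) (k : nat) :
  (fun n : nat => (2 * n%:R - expect_edges R n k / k.+1%:R) / n%:R : R) @ \oo --> 0.
Proof.
pose u g : R := 2 - mean_gain R k g / k.+1%:R.
have sum_u n : 2 * n%:R - expect_edges R n k / k.+1%:R = \sum_(0 <= g < n) u g.
  elim: n => [|n IHn].
    by rewrite expect_edges_small // bin0n big_geq // mulr0 mul0r subr0.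
  by rewrite big_nat_recr //= expect_edgesS -IHn /u -natr1; field; rewrite nat1r pnatr_eq0.
have u_cvg : u @ \oo --> 0.
  rewrite -(cvg_shiftn k.+1).
  have uE n : u (n + k.+1)%N = (k.+2%:R * harmonic (n + k.+1)%N : R).
    rewrite /u mean_gain_large ?leq_addl // /harmonic /=.
    by field; rewrite nat1r -natrD nat1r !pnatr_eq0.
  have harmonic_cvg : [sequence harmonic (n + k.+1)%N]_n @ \oo --> (0 : R).
    by rewrite cvg_shiftn; exact: cvg_harmonic.
  have := cvgMl_tmp (a := k.+2%:R) harmonic_cvg; rewrite mulr0.
  by rewrite (eq_cvg _ _ uE); apply.
rewrite -cvg_shiftS; apply: cvg_trans (cesaro u_cvg); apply: near_eq_cvg; near=> n.
by rewrite /arithmetic_mean /= sum_u seriesEnat mulrC.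
Unshelve. all: by end_near.
Qed.

Theorem mainTheorem15 (R : realType) (k : nat) :
  (forall n : nat, (1 <= n)%N ->
     ((n <= k + 2)%N -> expect_edges R n k = ('C(n, 2))%:R) /\
     ((k + 3 <= n)%N ->
        expect_edges R n k =
          2^-1 * (k.+1)%:R *
          (4 * n%:R - 3 * k%:R - 6
           - 2 * (k + 2)%:R * \sum_(k + 3 <= l < n.+1) (l%:R)^-1)) /\
     (forall t : R, 0 <= t ->
        prob_dev n k t <= 2 * expR (- (2 * t ^+ 2) / n%:R))) /\
  (* E[E] = (k+1)(2n - o(n)) as n -> oo *)
  ((fun n : nat => (2 * n%:R - expect_edges R n k / (k.+1)%:R) / n%:R : R)
     @ \oo --> (0 : R)).
Proof.
split; last exact: expect_edges_cvg.
move=> n n_gt0; split; [|split].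
- by move=> nk; apply: expect_edges_small; lia.
- by move=> kn; apply: expect_edges_large; lia.
- by move=> t; exact: prob_dev_le.
Qed.
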